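(* Let $G$ be a finite, simple, undirected, connected graph with $n$ vertices and let $\ell$ be an integer with $2\leq\ell\leq n-1$. Then $\beta_\ell^s(G)=\ell+1$ if and only if $n=\ell+1$ or $G$ is isomorphic to the star $K_{1,\ell+1}$.
   Context: $d$ is the shortest-path distance; for nonempty $X\subseteq V(G)$, $d(s,X)=\min_{x\in X}d(s,x)$; for $S=\{s_1,\dots,s_k\}$, $\mathcal{D}_S(X)=(d(s_1,X),\dots,d(s_k,X))$. $S\subseteq V(G)$ is an $\ell$-solid-resolving set if $\mathcal{D}_S(X)\neq\mathcal{D}_S(Y)$ for all distinct nonempty $X,Y\subseteq V(G)$ with $|X|\leq\ell$ ($Y$ of arbitrary size). $\beta_\ell^s(G)$ is the minimum cardinality of an $\ell$-solid-resolving set of $G$. *)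

From mathcomp Require Import all_boot.
Set Implicit Arguments. Unset Strict Implicit. Unset Printing Implicit Defensive.

Section Graphs.
Variable T : finType.
Implicit Types (e : rel T).

Definition simple_graph e := symmetric e /\ irreflexive e.
Definition connected_graph e := forall x y : T, connect e x y.

Fixpoint walk e (k : nat) (x y : T) : bool :=
  match k with
  | 0 => x == y
  | k'.+1 => [exists z, e x z && walk e k' z y]
  end.

(* shortest-path distance; in a connected graph every distance is < #|T|,
   so the minimum over lengths k < #|T| is the true distance. *)
Definition dist e (x y : T) : nat :=
  \big[minn/#|T|]_(k < #|T| | walk e k x y) (k : nat).

Definition dist_set e (s : T) (X : {set T}) : nat :=
  \big[minn/#|T|]_(x in X) dist e s x.

(* S is an l-solid-resolving set: D_S(X) <> D_S(Y) for all distinct nonempty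
   X, Y with |X| <= l; the vectors differ iff some coordinate s in S differs. *)
Definition solid_resolving e (l : nat) (S : {set T}) : bool :=
  [forall X : {set T}, forall Y : {set T},
     [&& X != set0, Y != set0, X != Y & #|X| <= l] ==>
     [exists s in S, dist_set e s X != dist_set e s Y]].

(* beta_l^s(G): minimum cardinality of an l-solid-resolving set
   (the whole vertex set is always one, so the minimum exists). *)
Definition solid_metric_dim e (l : nat) : nat :=
  \big[minn/#|T|.+1]_(S : {set T} | solid_resolving e l S) #|S|.

End Graphs.

(* the star K_{1,m} on vertex set 'I_m.+1 with center ord0 *)
Definition star_rel (m : nat) : rel 'I_m.+1 :=
  fun x y => (x != y) && ((x == ord0) || (y == ord0)).

Definition isomorphic (T U : finType) (e : rel T) (f : rel U) : Prop :=
  exists g : T -> U, bijective g /\ forall x y, e x y = f (g x) (g y).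

(* A set S is l-solid-resolving iff for every nonempty X with |X| <= l and every
   v outside X some s in S is strictly closer to v than to X; such an s lies
   outside X.  Taking X = S shows that S has more than l vertices.  If |S| = l+1
   and n >= l+2, taking X = S minus s forces s itself to be the witness, so S is
   independent; taking X = {w} together with S minus {s0, s1} shows that at most
   one s in S is at least as close to w as to v, which for |S| >= 3 leaves room
   for only one vertex c outside S.  Connectivity then makes G the star centred
   at c.  Conversely, V and the set of leaves of K_{1,l+1} are solid-resolving
   sets of size l+1. *)

From mathcomp Require Import all_boot order perm zify.
Import Order.TTheory.
Set Implicit Arguments. Unset Strict Implicit. Unset Printing Implicit Defensive.

Section Distance.
Variables (T : finType) (e : rel T).
Implicit Types (X : {set T}).

Lemma dist_le_walk k x y : k < #|T| -> walk e k x y -> dist e x y <= k.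
Proof. by move=> k_lt; apply: (@bigmin_le_cond _ nat _ _ (Ordinal k_lt)). Qed.

Lemma dist_le_card x y : dist e x y <= #|T|.
Proof. exact: (bigmin_le_id (T := nat)). Qed.

Lemma leq_dist k x y :
  k <= #|T| -> (forall j, j < k -> ~~ walk e j x y) -> k <= dist e x y.
Proof.
move=> k_le no_walk; apply: (le_bigmin (T := nat)) => // j wj.
by rewrite leEnat leqNgt; apply: contraL wj; apply: no_walk.
Qed.

Lemma dist_refl x : dist e x x = 0.
Proof.
apply/eqP; rewrite -leqn0; apply: dist_le_walk => /=; last exact: eqxx.
by apply/card_gt0P; exists x.
Qed.

Lemma dist_eq0 x y : (dist e x y == 0) = (x == y).
Proof.
have [->|xNy] := eqVneq x y; first by rewrite dist_refl.
apply/negbTE; rewrite -lt0n; apply: leq_dist => [|[|j] //=].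
by apply/card_gt0P; exists x.
Qed.

Lemma dist_edge x y : e x y -> dist e x y <= 1.
Proof.
move=> exy; have [T_gt1|T_le1] := ltnP 1 #|T|.
  by apply: dist_le_walk => //=; apply/existsP; exists y; rewrite exy eqxx.
exact: leq_trans (dist_le_card x y) T_le1.
Qed.

Lemma dist_nonedge x y : x != y -> ~~ e x y -> 1 < dist e x y.
Proof.
move=> xNy nexy; apply: leq_dist => [|[|[|j]] //= _]; first by apply/card_gt1P; exists x, y.
apply/existsP=> -[z /andP [exz /eqP zy]].
by rewrite -zy exz in nexy.
Qed.

Lemma dist_set_le s X x : x \in X -> dist_set e s X <= dist e s x.
Proof. exact: (bigmin_le_cond (T := nat)). Qed.

Lemma leq_dist_set s X k :
  k <= #|T| -> {in X, forall x, k <= dist e s x} -> k <= dist_set e s X.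
Proof. exact: (le_bigmin (T := nat)). Qed.

Lemma dist_set_eq0 s X : s \in X -> dist_set e s X = 0.
Proof. by move=> sX; apply/eqP; rewrite -leqn0 -(dist_refl s) dist_set_le. Qed.

Lemma dist_setU1 s v X :
  v \notin X -> dist_set e s (v |: X) = minn (dist e s v) (dist_set e s X).
Proof.
move=> vNX; rewrite /dist_set (bigminD1 (T := nat) _ _ _ (setU11 v X)).
congr minn; apply: eq_bigl => x.
change ((x \in v |: X) && (x != v) = (x \in X)); rewrite !inE.
by case: eqVneq => [->|]; rewrite ?(negbTE vNX) ?andbT.
Qed.

End Distance.

Section SolidResolving.
Variables (T : finType) (e : rel T).
Implicit Types (S X : {set T}).

Definition point_set_resolving l S := forall X v,
  X != set0 -> #|X| <= l -> v \notin X ->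
  exists2 s, s \in S & dist e s v < dist_set e s X.

Lemma solid_resolvingP l S :
  reflect (point_set_resolving l S) (solid_resolving e l S).
Proof.
apply: (iffP idP) => [S_res X v X0 Xl vNX | S_pres].
  have X0' : v |: X != set0 by apply/set0Pn; exists v; rewrite setU11.
  have XNvX : X != v |: X by apply: contraNneq vNX => ->; rewrite setU11.
  move/forallP/(_ X)/forallP/(_ (v |: X)): S_res.
  rewrite X0 X0' XNvX Xl => /existsP [s /andP [sS]].
  rewrite dist_setU1 // => dist_neq; exists s => //.
  by rewrite ltnNge; apply: contra dist_neq => /minn_idPr ->.
apply/forallP=> X; apply/forallP=> Y; apply/implyP=> /and4P [X0 Y0 XNY Xl].
have [YsubX | /subsetPn [y yY yNX]] := boolP (Y \subset X).
  have [x xX xNY] : exists2 x, x \in X & x \notin Y.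
    by apply/subsetPn; apply: contra XNY => XsubY; rewrite eqEsubset XsubY.
  have [s sS lt_s] := S_pres Y x Y0 (leq_trans (subset_leq_card YsubX) Xl) xNY.
  apply/existsP; exists s; rewrite sS /= neq_ltn.
  by rewrite (leq_ltn_trans (dist_set_le e s xX)).
have [s sS lt_s] := S_pres X y X0 Xl yNX.
apply/existsP; exists s; rewrite sS /= neq_ltn.
by rewrite (leq_ltn_trans (dist_set_le e s yY)) ?orbT.
Qed.

Lemma solid_resolving_witness l S X v :
  solid_resolving e l S -> X != set0 -> #|X| <= l -> v \notin X ->
  exists2 s, s \in S :\: X & dist e s v < dist_set e s X.
Proof.
move=> /solid_resolvingP S_res X0 Xl vNX; have [s sS lt_s] := S_res X v X0 Xl vNX.
exists s => //; rewrite inE sS andbT; apply: contraTN lt_s => sX.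
by rewrite dist_set_eq0.
Qed.

Lemma mem_resolving S X v :
  v \in S -> v \notin X -> exists2 s, s \in S & dist e s v < dist_set e s X.
Proof.
move=> vS vNX; exists v; rewrite // dist_refl.
apply: leq_dist_set => [|x xX]; first by apply/card_gt0P; exists v.
by rewrite lt0n dist_eq0; apply: contraNneq vNX => ->.
Qed.

Lemma setT_solid_resolving l : solid_resolving e l [set: T].
Proof. by apply/solid_resolvingP => X v _ _; apply: mem_resolving; rewrite inE. Qed.

Lemma solid_resolving_card_gt l S :
  0 < l -> l < #|T| -> solid_resolving e l S -> l < #|S|.
Proof.
move=> l_gt0 l_ltT S_res; rewrite ltnNge; apply/negP => S_le.
have [v] : exists v, v \in ~: S by apply/set0Pn; rewrite -card_gt0; have := cardsC S; lia.
rewrite inE => vNS.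
have [X [SX X0 Xl vNX]] : exists X, [/\ S \subset X, X != set0, #|X| <= l & v \notin X].
  have [->|[s sS]] := set_0Vmem S; last first.
    by exists S; split=> //; apply/set0Pn; exists s.
  have [x] : exists x, x \in [set~ v] by apply/set0Pn; rewrite -card_gt0 cardsC1; lia.
  rewrite !inE => xNv; exists [set x]; rewrite sub0set -card_gt0 cards1 inE eq_sym.
  by split.
have /eqP SX0 : S :\: X == set0 by rewrite setD_eq0.
by have [s] := solid_resolving_witness S_res X0 Xl vNX; rewrite SX0 inE.
Qed.

Lemma solid_metric_dim_le l S : solid_resolving e l S -> solid_metric_dim e l <= #|S|.
Proof. exact: (bigmin_le_cond (T := nat)). Qed.

Lemma solid_metric_dim_attained l :
  exists2 S, solid_resolving e l S & #|S| = solid_metric_dim e l.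
Proof.
have [S S_res dimE] :=
  eq_bigmin (T := nat) _ _ _ (setT_solid_resolving l) (fun S _ => leqW (max_card S)).
by exists S; last exact: esym dimE.
Qed.

End SolidResolving.

Section Stars.
Variables (T : finType) (e : rel T).

Definition star_center c := forall x y, e x y = (x != y) && ((x == c) || (y == c)).

Lemma isomorphic_starP (m : nat) :
  isomorphic e (@star_rel m) <-> exists c, #|T| = m.+1 /\ star_center c.
Proof.
split=> [[g [g_bij eg]] | [c [T_card star_c]]].
  have [g' gK g'K] := g_bij.
  have g_ord0 z : (g z == ord0) = (z == g' ord0) by rewrite -{1}(g'K ord0) (bij_eq g_bij).
  exists (g' ord0); split; first by rewrite (bij_eq_card g_bij) card_ord.
  by move=> x y; rewrite eg /star_rel (bij_eq g_bij) !g_ord0.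
pose h x : 'I_m.+1 := cast_ord T_card (enum_rank x).
have h_inj : injective h by move=> x y /cast_ord_inj /enum_rank_inj.
pose g x := tperm (h c) ord0 (h x).
have g_inj : injective g by move=> x y /perm_inj /h_inj.
have gc : g c = ord0 by rewrite /g tpermL.
exists g; split; first by apply: (inj_card_bij g_inj); rewrite card_ord T_card.
by move=> x y; rewrite star_c /star_rel (inj_eq g_inj) -gc !(inj_eq g_inj).
Qed.

Lemma star_solid_resolving l c :
  l.+2 <= #|T| -> star_center c -> solid_resolving e l [set~ c].
Proof.
move=> T_ge star_c; apply/solid_resolvingP => X v X0 Xl vNX.
have [vc | vNc] := eqVneq v c; last by apply: mem_resolving; rewrite ?inE.
have [s] : exists s, s \in [set~ c] :\: X.
  apply/set0Pn; rewrite -card_gt0 cardsD cardsC1.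
  have := subset_leq_card (subsetIr [set~ c] X); lia.
rewrite !inE => /andP [sNX sNc]; exists s; first by rewrite !inE.
apply: (@leq_ltn_trans 1); first by rewrite vc dist_edge // star_c sNc eqxx orbT.
apply: leq_dist_set => [|x xX]; first lia.
have xNc : x != c by apply: contraNneq vNX => xc; rewrite vc -xc.
apply: dist_nonedge; first by apply: contraNneq sNX => ->.
by rewrite star_c (negbTE sNc) (negbTE xNc) andbF.
Qed.

Lemma star_of_independent_complement c :
  simple_graph e -> connected_graph e ->
  {in [set~ c] &, forall x y, ~~ e x y} -> star_center c.
Proof.
move=> [e_sym e_irr] e_conn indep.
have adj_c x : x != c -> e x c.
  move=> xNc; have /connectP [[|z p] /= xp lastp] := e_conn x c.
    by rewrite lastp eqxx in xNc.
  case/andP: xp => exz _; have [<- // | zNc] := eqVneq z c.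
  by have := indep x z; rewrite !inE xNc zNc exz => /(_ isT isT).
move=> x y; have [-> | xNc] := eqVneq x c; have [-> | yNc] := eqVneq y c.
- by rewrite e_irr.
- by rewrite e_sym adj_c.
- by rewrite adj_c // xNc.
by rewrite andbF; apply/negbTE/indep; rewrite !inE.
Qed.

End Stars.

Section ExtremalSolidResolving.
Variables (T : finType) (e : rel T) (l : nat) (S : {set T}).
Hypothesis S_res : solid_resolving e l S.

Lemma solid_resolving_closer_eq s0 s1 v w :
  #|S| <= l.+1 -> s0 \in S -> s1 \in S -> v \notin S -> w \notin S -> v != w ->
  dist e s0 w <= dist e s0 v -> dist e s1 w <= dist e s1 v -> s0 = s1.
Proof.
move=> S_le s0S s1S vNS wNS vNw le0 le1; apply/eqP/negPn/negP => s0Ns1.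
pose X := w |: (S :\ s0 :\ s1).
have X0 : X != set0 by apply/set0Pn; exists w; rewrite setU11.
have Xl : #|X| <= l.
  move: S_le; rewrite cardsU1 (cardsD1 s0 S) (cardsD1 s1 (S :\ s0)) s0S !inE s1S eq_sym s0Ns1.
  case: (w \in _); lia.
have vNX : v \notin X by rewrite !inE (negbTE vNw) (negbTE vNS) !andbF.
have [s sSX lt_s] := solid_resolving_witness S_res X0 Xl vNX.
have lt_w : dist e s v < dist e s w := leq_trans lt_s (dist_set_le e s (setU11 w _)).
have : (s == s0) || (s == s1).
  case/setDP: sSX => sS; apply: contraNT => /norP [sNs0 sNs1].
  by rewrite !inE sNs0 sNs1 sS orbT.
by case/orP=> /eqP s_eq; [move: le0 | move: le1]; rewrite -s_eq leqNgt lt_w.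
Qed.

Lemma solid_resolving_complement_card_le1 :
  2 < #|S| <= l.+1 -> #|~: S| <= 1.
Proof.
case/andP=> S_gt2 S_le; apply/card_le1_eqP => v w; rewrite !inE => vNS wNS.
apply/eqP; apply: contraTT S_gt2 => wNv; rewrite -leqNgt.
pose closer x y := [set s in S | dist e s x <= dist e s y].
have closer_le1 x y : x \notin S -> y \notin S -> y != x -> #|closer x y| <= 1.
  move=> xNS yNS yNx; apply/card_le1_eqP => s0 s1.
  rewrite /closer !inE => /andP [s0S le0] /andP [s1S le1].
  exact: (solid_resolving_closer_eq S_le s1S s0S yNS xNS yNx le1 le0).
have : S \subset closer v w :|: closer w v.
  by apply/subsetP => s sS; rewrite !inE sS leq_total.
move/subset_leq_card; rewrite cardsU.
have := closer_le1 v w vNS wNS wNv.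
have := closer_le1 w v wNS vNS; rewrite eq_sym wNv => /(_ isT).
lia.
Qed.

Lemma solid_resolving_independent v :
  irreflexive e -> 1 < #|S| <= l.+1 -> v \notin S -> {in S &, forall s t, ~~ e s t}.
Proof.
move=> e_irr /andP [S_gt1 S_le] vNS s t sS tS; apply/negP => est.
have sNt : t != s by apply: contraTneq est => ->; rewrite e_irr.
have tX : t \in S :\ s by rewrite !inE sNt.
have X0 : S :\ s != set0 by apply/set0Pn; exists t.
have Xl : #|S :\ s| <= l by move: S_le; rewrite (cardsD1 s S) sS.
have vNX : v \notin S :\ s by rewrite !inE (negbTE vNS) andbF.
have [s' s'SX lt_s'] := solid_resolving_witness S_res X0 Xl vNX.
have s'_eq : s' = s.
  by case/setDP: s'SX => s'S; rewrite !inE s'S andbT negbK => /eqP.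
rewrite s'_eq in lt_s'.
have : dist e s v < 1 := leq_trans lt_s' (leq_trans (dist_set_le e s tX) (dist_edge est)).
by rewrite ltnS leqn0 dist_eq0 => /eqP sv; rewrite -sv sS in vNS.
Qed.

End ExtremalSolidResolving.

Lemma tight_solid_resolving_star (T : finType) (e : rel T) l S :
  simple_graph e -> connected_graph e -> 2 <= l -> l.+2 <= #|T| ->
  solid_resolving e l S -> #|S| = l.+1 -> exists c, #|T| = l.+2 /\ star_center e c.
Proof.
move=> e_simple e_conn l_ge2 T_ge S_res S_card.
have /cards1P [c Sc] : #|~: S| == 1.
  have := solid_resolving_complement_card_le1 S_res; rewrite S_card ltnS l_ge2 leqnn.
  by have := cardsC S; lia.
have S_eq : S = [set~ c] by rewrite -Sc setCK.
exists c; split; first by have := cardsC S; rewrite Sc cards1; lia.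
apply: star_of_independent_complement => //; rewrite -S_eq.
apply: (solid_resolving_independent (v := c) S_res e_simple.2); first by rewrite S_card; lia.
by rewrite S_eq !inE eqxx.
Qed.

Unset Implicit Arguments. Set Strict Implicit. Set Printing Implicit Defensive.

Theorem mainTheorem6 (T : finType) (e : rel T) (l : nat) :
  simple_graph e -> connected_graph e ->
  2 <= l -> l <= #|T| - 1 ->
  (solid_metric_dim e l = l.+1 <->
   (#|T| = l.+1 \/ isomorphic e (@star_rel l.+1))).
Proof.
move=> e_simple e_conn l_ge2 l_le.
have l_ltT : l < #|T| by lia.
have dim_gt : l < solid_metric_dim e l.
  have [S S_res <-] := solid_metric_dim_attained e l.
  by apply: solid_resolving_card_gt S_res; lia.
split=> [dim_eq | [T_eq | /isomorphic_starP [c [T_eq star_c]]]].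
- have [S S_res] := solid_metric_dim_attained e l; rewrite dim_eq => S_card.
  have [T_eq | T_ge] : #|T| = l.+1 \/ l.+2 <= #|T| by lia.
    by left.
  right; apply/isomorphic_starP.
  exact: tight_solid_resolving_star e_simple e_conn l_ge2 T_ge S_res S_card.
- apply/eqP; rewrite eqn_leq dim_gt andbT -T_eq -cardsT.
  exact/solid_metric_dim_le/setT_solid_resolving.
apply/eqP; rewrite eqn_leq dim_gt andbT.
have -> : l.+1 = #|[set~ c]| by rewrite cardsC1 T_eq.
by apply/solid_metric_dim_le/star_solid_resolving; rewrite ?T_eq.
Qed.
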